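(* Let $\pi\colon(T,X)\to(T,Y)$ be a nontrivial extension of compact metric flows with $(T,Y)$ minimal. Suppose that $\mathtt R_\pi$ has a dense set of a.p. points and that $\pi$ is weakly mixing. Then there exists a residual set $Y_{\mathrm{LY}}\subseteq Y$ such that for every $y\in Y_{\mathrm{LY}}$, the fiber $\pi^{-1}y$ has no isolated points and contains an uncountable subset $B$ which is dense in $\pi^{-1}y$ and is Li-Yorke scrambled for $\pi$ relative to $\mathtt R_\pi$.
   Context: $\mathtt R_\pi=\{(x_1,x_2):\pi x_1=\pi x_2\}$ with diagonal $T$-action; $\Delta_X$ the diagonal; nontrivial means $\mathtt R_\pi\ne\Delta_X$. A point is a.p. if its return-time sets to neighborhoods are syndetic in $T$. $\pi$ is weakly mixing if $(T,\mathtt R_\pi)$ is topologically transitive (for nonempty open $U,V\subseteq\mathtt R_\pi$ some $t$ has $V\cap tU\ne\emptyset$). For closed $L$ with $\Delta_X\subsetneq L\subseteq\mathtt R_\pi$, $(x,x')$ is a Li-Yorke pair for $\pi$ rel. $L$ if $(x,x')\in\mathtt R_\pi$ and $L\subseteq\overline{T(x,x')}$; a set $S\subseteq X$ is Li-Yorke scrambled for $\pi$ rel. $L$ if every $(x,x')\in S\times S$ with $x\ne x'$ is a Li-Yorke pair for $\pi$ rel. $L$. *)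

From HB Require Import structures.
From mathcomp Require Import all_boot all_order all_algebra.
From mathcomp Require Import all_classical all_reals all_analysis.
Set Implicit Arguments. Unset Strict Implicit. Unset Printing Implicit Defensive.
Import Order.TTheory GRing.Theory Num.Theory.
Local Open Scope classical_set_scope.

Definition topological_group (T : topologicalType)
    (mul : T -> T -> T) (inv : T -> T) (e : T) : Prop :=
  [/\ (forall a b c, mul a (mul b c) = mul (mul a b) c),
      (forall a, mul e a = a /\ mul a e = a),
      (forall a, mul (inv a) a = e /\ mul a (inv a) = e),
      continuous (fun p : T * T => mul p.1 p.2) &
      continuous inv].

Definition is_action (T : topologicalType) (mul : T -> T -> T) (e : T)
    (X : topologicalType) (act : T -> X -> X) : Prop :=
  [/\ (forall x, act e x = x),
      (forall s t x, act (mul s t) x = act s (act t x)) &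
      continuous (fun p : T * X => act p.1 p.2)].

Definition syndetic (T : topologicalType) (mul : T -> T -> T) (A : set T) : Prop :=
  exists K : set T, compact K /\
    forall t, exists k a, K k /\ A a /\ t = mul k a.

Definition minimal_flow (T X : topologicalType) (act : T -> X -> X) : Prop :=
  forall M : set X, M !=set0 -> closed M ->
    (forall t x, M x -> M (act t x)) -> M = setT.

Definition Rpi (X Y : Type) (pi : X -> Y) : set (X * X) :=
  [set p | pi p.1 = pi p.2].

Definition diagX (X : Type) : set (X * X) := [set p | p.1 = p.2].

Definition act2 (T X : Type) (act : T -> X -> X) (t : T) (p : X * X) : X * X :=
  (act t p.1, act t p.2).

(* Neighborhoods of p in S are O ∩ S with O a
   neighborhood of p in X × X; as S is invariant, t p ∈ O ∩ S iff t p ∈ O. *)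
Definition ap_point (T X : topologicalType) (mul : T -> T -> T)
    (act : T -> X -> X) (S : set (X * X)) (p : X * X) : Prop :=
  S p /\ forall O : set (X * X), nbhs p O ->
    syndetic mul [set t | (O `&` S) (act2 act t p)].

Definition dense_ap (T X : topologicalType) (mul : T -> T -> T)
    (act : T -> X -> X) (S : set (X * X)) : Prop :=
  forall O : set (X * X), open O -> O `&` S !=set0 ->
    O `&` ap_point mul act S !=set0.

Definition top_transitive (T X : topologicalType) (act : T -> X -> X)
    (S : set (X * X)) : Prop :=
  forall O1 O2 : set (X * X), open O1 -> open O2 ->
    O1 `&` S !=set0 -> O2 `&` S !=set0 ->
    exists t, (O2 `&` S) `&` (act2 act t @` (O1 `&` S)) !=set0.

Definition weakly_mixing (T X Y : topologicalType) (actX : T -> X -> X)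
    (pi : X -> Y) : Prop := top_transitive actX (Rpi pi).

Definition orbit_closure2 (T X : topologicalType) (act : T -> X -> X)
    (p : X * X) : set (X * X) :=
  closure (range (fun t => act2 act t p)).

Definition LY_pair (T X Y : topologicalType) (act : T -> X -> X) (pi : X -> Y)
    (L : set (X * X)) (x x' : X) : Prop :=
  Rpi pi (x, x') /\ L `<=` orbit_closure2 act (x, x').

Definition LY_scrambled (T X Y : topologicalType) (act : T -> X -> X)
    (pi : X -> Y) (L : set (X * X)) (S : set X) : Prop :=
  forall x x', S x -> S x' -> x <> x' -> LY_pair act pi L x x'.

Definition residual (Y : topologicalType) (A : set Y) : Prop :=
  exists F : nat -> set Y, (forall n, open (F n) /\ dense (F n)) /\
    \bigcap_n F n `<=` A.

From HB Require Import structures.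
From mathcomp Require Import all_boot all_order all_algebra.
From mathcomp Require Import all_classical all_reals all_analysis.
Local Open Scope classical_set_scope.

(* Write rho (x1, x2) = pi x1 on R_pi.  The proof has three ingredients.
   1. A Mycielski-type theorem (Section Mycielski): in a nonempty compact
      perfect set F with a countable base, countably many open relations W k,
      each meeting every box (U ∩ F) × (V ∩ F), admit an uncountable dense
      S ⊆ F whose distinct pairs lie in every W k.  It is proved with a Cantor
      scheme of shrinking, pairwise separated balls.
   2. Semi-openness (lemma semi_open): since R_pi has a dense set of a.p.
      points and Y is minimal, rho maps nonempty relatively open subsets of
      R_pi onto sets with nonempty interior.  Hence, for each pair O, P with
      O ∩ R_pi ⊆ closure (P ∩ R_pi), the set of y whose fiber meets P ∩ R_pi
      as soon as it meets O ∩ R_pi contains a dense open set.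
   3. Using a countable base (B n) of X and weak mixing, the relations
      "the orbit of the pair visits B i × B j" and "off the diagonal" are dense
      in R_pi; intersecting the countably many dense open sets of 2. gives the
      residual set.  Over such y the fiber is perfect and every visiting
      relation is box-dense in it, so 1. yields the scrambled set.  *)

Set Implicit Arguments. Unset Strict Implicit. Unset Printing Implicit Defensive.
Import Order.TTheory GRing.Theory Num.Theory.

Section MetricFacts.
Local Open Scope ring_scope.
Context {R : realType} {X : metricType R}.
Implicit Types (x y z : X) (r : R).

Lemma ball_mdist x r y : ball x r y <-> mdist x y < r.
Proof. by rewrite ballEmdist. Qed.

Lemma ball_inner x r y : ball x r y -> exists2 e, 0 < e & ball y e `<=` ball x r.
Proof.
move=> /ball_mdist xy; exists (r - mdist x y); first by rewrite subr_gt0.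
move=> z /ball_mdist yz; apply/ball_mdist.
by apply: (le_lt_trans (metric_triangle x y z)); rewrite -ltrBrDl.
Qed.

Lemma open_ball x r : open (ball x r).
Proof.
rewrite openE => y /ball_inner [e e0 sub]; rewrite /interior.
exact: (filterS sub (nbhsx_ballx y _ e0)).
Qed.

Lemma closure_ball_half x r : 0 < r -> closure (ball x (r / 2)) `<=` ball x r.
Proof.
move=> r0 y cly; apply/ball_mdist; rewrite ltNge; apply/negP => ry.
have e0 : 0 < mdist x y - r / 2.
  by rewrite subr_gt0 (lt_le_trans _ ry) // ltr_pdivrMr // ltr_pMr // ltr1n.
have [z [/ball_mdist xz /ball_mdist yz]] := cly _ (nbhsx_ballx y _ e0).
have := metric_triangle x z y; rewrite (metric_sym z y) => h.
have : mdist x y < mdist x y.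
  by apply: (le_lt_trans h); rewrite -(subrK (r / 2) (mdist x y)) addrC ltrD.
by rewrite ltxx.
Qed.

Lemma disjoint_balls x y e : e *+ 2 <= mdist x y -> ball x e `&` ball y e = set0.
Proof.
move=> exy; apply/seteqP; split=> // z [/ball_mdist xz /ball_mdist yz].
have := metric_triangle x z y; rewrite (metric_sym z y) => h.
have : mdist x y < e *+ 2 by apply: (le_lt_trans h); rewrite mulr2n ltrD.
by rewrite ltNge exy.
Qed.

Lemma open_offdiag : open [set p : X * X | p.1 <> p.2].
Proof.
rewrite openE => p /= np.
have d0 : 0 < mdist p.1 p.2 by rewrite mdist_gt0; apply/eqP.
have e0 : 0 < mdist p.1 p.2 / 2 by rewrite divr_gt0.
exists (ball p.1 (mdist p.1 p.2 / 2), ball p.2 (mdist p.1 p.2 / 2)).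
  by split; exact: nbhsx_ballx.
move=> [a b] [/= pa pb] eab; subst b.
have : (ball p.1 (mdist p.1 p.2 / 2) `&` ball p.2 (mdist p.1 p.2 / 2)) a by [].
by rewrite disjoint_balls // mulr2n -splitr.
Qed.

End MetricFacts.

Section ProductFacts.
Context {U V : topologicalType}.

Lemma open_setX (A : set U) (B : set V) : open A -> open B -> open (A `*` B).
Proof.
move=> oA oB; rewrite openE => p [Ap Bp].
by exists (A, B) => //; split; exact: open_nbhs_nbhs.
Qed.

Lemma nbhs_box (p : U * V) (N : set (U * V)) :
  nbhs p N -> exists A B, [/\ nbhs p.1 A, nbhs p.2 B & A `*` B `<=` N].
Proof. by move=> [[A B] /= [nA nB] sub]; exists A, B; split. Qed.

Lemma closure_setX (A : set U) (B : set V) :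
  closure (A `*` B) `<=` closure A `*` closure B.
Proof.
move=> p clp; split => N nN.
  have : nbhs p (N `*` setT) by exists (N, setT) => //; split => //; apply: filterT.
  by move=> /clp [q [[Aq _] [Nq _]]]; exists q.1.
have : nbhs p (setT `*` N) by exists (setT, N) => //; split => //; apply: filterT.
by move=> /clp [q [[_ Bq] [_ Nq]]]; exists q.2.
Qed.

Lemma continuous_fst_comp {W : topologicalType} (f : U -> W) :
  continuous f -> continuous (fun p : U * V => f p.1).
Proof.
move=> cf p; have h : fst @ p --> p.1 by exact: cvg_fst.
by have := continuous_comp h (cf p.1); exact.
Qed.

Lemma continuous_snd_comp {W : topologicalType} (f : V -> W) :
  continuous f -> continuous (fun p : U * V => f p.2).
Proof.
move=> cf p; have h : snd @ p --> p.2 by exact: cvg_snd.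
by have := continuous_comp h (cf p.2); exact.
Qed.

Lemma hausdorff_prod : hausdorff_space U -> hausdorff_space V ->
  hausdorff_space (U * V)%type.
Proof.
move=> hU hV [p1 p2] [q1 q2] clpq; congr pair.
- apply: hU => A B nA nB.
  have nA' : nbhs (p1, p2) (A `*` setT) by exists (A, setT) => //; split => //; apply: filterT.
  have nB' : nbhs (q1, q2) (B `*` setT) by exists (B, setT) => //; split => //; apply: filterT.
  by have [z [[? _] [? _]]] := clpq _ _ nA' nB'; exists z.1.
- apply: hV => A B nA nB.
  have nA' : nbhs (p1, p2) (setT `*` A) by exists (setT, A) => //; split => //; apply: filterT.
  have nB' : nbhs (q1, q2) (setT `*` B) by exists (setT, B) => //; split => //; apply: filterT.
  by have [z [[_ ?] [_ ?]]] := clpq _ _ nA' nB'; exists z.2.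
Qed.

End ProductFacts.

Lemma image_closure {U V : topologicalType} (f : U -> V) (A : set U) :
  continuous f -> f @` closure A `<=` closure (f @` A).
Proof.
move=> cf _ [q clq <-] N nN.
have /clq [z [Az Nz]] : nbhs q (f @^-1` N) by exact: cf.
by exists (f z); split => //; exists z.
Qed.

Lemma closed_fiber {U V : topologicalType} (f : U -> V) (y : V) :
  continuous f -> hausdorff_space V -> closed (f @^-1` [set y]).
Proof.
move=> cf hV; apply: preimage_closed; first by move=> x _; exact: cf.
exact/accessible_closed_set1/hausdorff_accessible.
Qed.

Section CountableBase.
Local Open Scope ring_scope.
Context {R : realType} {X : metricType R}.
Hypothesis cX : compact [set: X].

Lemma finite_net e : 0 < e ->
  exists S : seq X, forall y, exists2 s, s \in S & ball s e y.
Proof.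
move=> e0; apply: contrapT => /forallNP nS.
pose f (S : seq X) : set X := [set y | forall s, s \in S -> ~ ball s e y].
have ff : Filter (filter_from setT f).
  apply: filter_from_filter; first by exists [::].
  move=> S S' _ _; exists (S ++ S') => // y fy; split => s sS.
    by apply: fy; rewrite mem_cat sS.
  by apply: fy; rewrite mem_cat sS orbT.
have pf : ProperFilter (filter_from setT f).
  apply: filter_from_proper => S _.
  have /existsNP [y hy] := nS S; exists y => s sS bs.
  by apply: hy; exists s.
have [x [_ clx]] := cX pf filterT.
have [z [fz bz]] := clx (f [:: x]) (ball x e)
  (ex_intro2 _ _ [:: x] I (@subset_refl _ _)) (nbhsx_ballx x _ e0).
exact: fz x (mem_head _ _) bz.
Qed.

(* The balls of radius 1/(n+1) centered at a finite 1/(n+1)-net, enumerated by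
   [nat] through [pickle], form a countable base of open sets. *)
Lemma compact_countable_base : exists B : nat -> set X, (forall n, open (B n)) /\
  (forall x N, nbhs x N -> exists n, B n x /\ B n `<=` N).
Proof.
have rpos (n : nat) : 0 < n.+1%:R^-1 :> R by rewrite invr_gt0.
pose L n := sval (cid (finite_net (rpos n))).
have LP n y : exists2 s, s \in L n & ball s n.+1%:R^-1 y :=
  svalP (cid (finite_net (rpos n))) y.
pose B k := match unpickle k with
  | Some (n, i) => match nth None (map Some (L n)) i with
      | Some c => ball c n.+1%:R^-1 | None => set0 end
  | None => set0 end.
exists B; split.
  move=> k; rewrite /B; case: (unpickle k) => [[n i]|]; last exact: open0.
  by case: nth => [c|]; [exact: open_ball|exact: open0].
move=> x N /nbhs_ballP [e e0 sub].
have e20 : 0 < e / 2 by rewrite divr_gt0.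
have [M _ hM] := near_infty_natSinv_lt (PosNum e20).
have hr : M.+1%:R^-1 < e / 2 := hM M (leqnn M).
have [c cL bc] := LP M x.
exists (pickle (M, index c (L M))); rewrite /B pickleK.
rewrite (nth_map c) ?index_mem // nth_index //; split => // y cy; apply: sub.
have : ball x (M.+1%:R^-1 + M.+1%:R^-1) y by exact: ball_triangle (ball_sym bc) cy.
by apply: le_ball; rewrite [e]splitr; apply: lerD; exact: ltW.
Qed.

End CountableBase.

Lemma nbhs_closure_sub {R : realType} {X : metricType R} (p : X * X) (P : set (X * X)) :
  nbhs p P -> exists2 W, nbhs p W & closure W `<=` P.
Proof.
move=> /nbhs_box [A1 [A2 [/nbhs_ballP [r1 r10 s1] /nbhs_ballP [r2 r20 s2] sA]]].
exists (ball p.1 (r1 / 2) `*` ball p.2 (r2 / 2)).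
  by exists (ball p.1 (r1 / 2), ball p.2 (r2 / 2)) => //;
    split; apply: nbhsx_ballx; rewrite divr_gt0.
move=> q /closure_setX [/(closure_ball_half r10) h1 /(closure_ball_half r20) h2].
by apply: sA; split; [exact: s1|exact: s2].
Qed.
(** * A Mycielski-type theorem

   Then F contains an
   uncountable dense set B all of whose pairs of distinct points lie in every
   W k.  The set B is the set of limit points of a Cantor scheme of nested
   balls, new branches being started at every stage to make B dense. *)

Definition perfect_on (X : topologicalType) (F : set X) :=
  forall x, F x -> forall N, nbhs x N -> exists2 x', F x' & N x' /\ x' <> x.

Section BoxDense.
Local Open Scope ring_scope.
Context {R : realType} {X : metricType R}.
Variable F : set X.

Definition box_dense (D : set (X * X)) := forall U V : set X, open U -> open V ->
  U `&` F !=set0 -> V `&` F !=set0 ->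
  exists x x', [/\ U x, F x, V x', F x' & D (x, x')].

Definition swap_rel (D : set (X * X)) : set (X * X) := [set p | D (p.2, p.1)].

Lemma open_ball_box (D : set (X * X)) x x' : open D -> D (x, x') ->
  exists2 e, 0 < e & forall a b, ball x e a -> ball x' e b -> D (a, b).
Proof.
rewrite openE => oD /oD; rewrite /interior => /nbhs_ballP [e e0 sub].
by exists e => // a b xa xb; apply: (sub (a, b)); split.
Qed.

Lemma open_swap_rel D : open D -> open (swap_rel D).
Proof.
move=> oD; have -> : swap_rel D = (fun p : X * X => (p.2, p.1)) @^-1` D by [].
by apply: open_comp => // p _; exact: swap_continuous.
Qed.

Lemma box_dense_swap D : box_dense D -> box_dense (swap_rel D).
Proof.
move=> bD U V oU oV UF VF.
by have [x [x' [Vx Fx Ux Fx' Dxx]]] := bD V U oV oU VF UF; exists x', x.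
Qed.

(* Box-density is stable under intersection with an open box-dense relation:
   shrink the boxes around a point of the first relation. *)
Lemma box_denseI A B : open A -> box_dense A -> box_dense B -> box_dense (A `&` B).
Proof.
move=> oA bA bB U V oU oV UF VF.
have [x [x' [Ux Fx Vx' Fx' Axx]]] := bA U V oU oV UF VF.
have [e e0 box] := open_ball_box oA Axx.
have o1 : open (U `&` ball x e) by apply: openI => //; exact: open_ball.
have o2 : open (V `&` ball x' e) by apply: openI => //; exact: open_ball.
have n1 : (U `&` ball x e) `&` F !=set0 by exists x; do 2 split => //; exact: ballxx.
have n2 : (V `&` ball x' e) `&` F !=set0 by exists x'; do 2 split => //; exact: ballxx.
have [a [b [[Ua xa] Fa [Vb x'b] Fb Bab]]] := bB _ _ o1 o2 n1 n2.
by exists a, b; split => //; split => //; exact: box.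
Qed.

Definition good_ball (b : X * R) := F b.1 /\ 0 < b.2.
Definition bset (b : X * R) := ball b.1 b.2.

Definition separated (D : set (X * X)) (b1 b2 : X * R) :=
  bset b1 `&` bset b2 = set0 /\ (forall a a', bset b1 a -> bset b2 a' -> D (a, a')).

Lemma separatedS D b1 b2 c1 c2 : separated D b1 b2 ->
  bset c1 `<=` bset b1 -> bset c2 `<=` bset b2 -> separated D c1 c2.
Proof.
move=> [d1 d2] s1 s2; split; last by move=> a a' /s1 h1 /s2 h2; exact: d2.
apply/seteqP; split => // z [/s1 z1 /s2 z2].
by have : (bset b1 `&` bset b2) z by []; rewrite d1.
Qed.

Lemma separated_sym D b1 b2 : (forall p, D p -> D (p.2, p.1)) ->
  separated D b1 b2 -> separated D b2 b1.
Proof.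
move=> Ds [d1 d2]; split; first by rewrite setIC.
by move=> a a' h1 h2; exact: (Ds (a', a) (d2 _ _ h2 h1)).
Qed.

Hypothesis perfF : perfect_on F.

(* Inside two good balls (possibly equal) one finds two D-separated good balls:
   perfectness of [F] provides two distinct nearby centers. *)
Lemma separate_pair D b1 b2 : open D -> box_dense D -> good_ball b1 -> good_ball b2 ->
  exists b1' b2', [/\ good_ball b1', good_ball b2', bset b1' `<=` bset b1,
                      bset b2' `<=` bset b2 & separated D b1' b2'].
Proof.
move=> oD bD [F1 r1] [F2 r2].
have n1 : bset b1 `&` F !=set0 by exists b1.1; split => //; exact: ballxx.
have n2 : bset b2 `&` F !=set0 by exists b2.1; split => //; exact: ballxx.
have [x [x' [U1 Fx U2 Fx' Dxx]]] := bD _ _ (open_ball _ _) (open_ball _ _) n1 n2.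
have [e e0 box] := open_ball_box oD Dxx.
have [e1 e10 s1] := ball_inner U1.
have [e2 e20 s2] := ball_inner U2.
pose e' := Num.min e (Num.min e1 e2).
have e'0 : 0 < e' by rewrite !lt_min e0 e10 e20.
have e'e : e' <= e by rewrite ge_min lexx.
have e'e1 : e' <= e1 by rewrite !ge_min lexx orbT.
have e'e2 : e' <= e2 by rewrite !ge_min lexx !orbT.
clearbody e'.
have [y [Fy y'x' yx]] : exists y, [/\ F y, ball x' e' y & y <> x].
  case: (pselect (x = x')) => [xx'|xx'].
    have [y Fy [xy yx]] := perfF Fx (nbhsx_ballx x _ e'0).
    by exists y; split => //; rewrite -xx'.
  by exists x'; split => //; [exact: ballxx | move=> h; apply: xx'].
have [e3 e30 s3] := ball_inner y'x'.
have dxy : 0 < mdist x y by rewrite mdist_gt0; apply/eqP => h; apply: yx.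
pose d := Num.min e' (Num.min e3 (mdist x y / 2)).
have d0 : 0 < d by rewrite !lt_min e'0 e30 divr_gt0.
have de' : d <= e' by rewrite ge_min lexx.
have de3 : d <= e3 by rewrite !ge_min lexx orbT.
have ddxy : d <= mdist x y / 2 by rewrite !ge_min lexx !orbT.
exists (x, d), (y, d); split => //.
- by move=> z /(le_ball de') /(le_ball e'e1) /s1.
- by move=> z /(le_ball de3) /s3 /(le_ball e'e2) /s2.
- split.
    apply: disjoint_balls; rewrite mulr2n.
    by rewrite [X in _ <= X](splitr (mdist x y)) lerD.
  move=> a a' xa ya'; apply: box; first exact: (le_ball (le_trans de' e'e)).
  by apply: (le_ball e'e); apply: s3; apply: (le_ball de3).
Qed.

End BoxDense.

Section SeparateFamily.
Context {R : realType} {X : metricType R}.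
Variable F : set X.
Hypothesis perfF : perfect_on F.
Variable D : set (X * X).
Hypotheses (oD : open D) (bD : box_dense F D) (sD : forall p, D p -> D (p.2, p.1)).
Variable K : eqType.

Lemma separate_from_seq (ks : seq K) (b : K -> X * R) a :
  (forall k, k \in ks -> good_ball F (b k)) ->
  (forall k k', k \in ks -> k' \in ks -> k != k' -> separated D (b k) (b k')) ->
  good_ball F a ->
  exists b2 a2, [/\ forall k, k \in ks -> good_ball F (b2 k) /\ bset (b2 k) `<=` bset (b k),
    forall k k', k \in ks -> k' \in ks -> k != k' -> separated D (b2 k) (b2 k'),
    good_ball F a2, bset a2 `<=` bset a & forall k, k \in ks -> separated D (b2 k) a2].
Proof.
elim: ks a => [|k0 ks IH] a gbk prk ga.
  by exists b, a; split => // k; rewrite in_nil.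
have [b1' [a' [gb1' ga' s1 sa pr1]]] :=
  separate_pair perfF oD bD (gbk k0 (mem_head _ _)) ga.
have [||//|b2 [a2 [g2 p2 ga2 sa2 pa2]]] := IH a'.
- by move=> k kk; apply: gbk; rewrite in_cons kk orbT.
- by move=> k k' kk kk' nkk; apply: prk; rewrite // in_cons ?kk ?kk' orbT.
exists (fun z => if z == k0 then b1' else b2 z), a2; split => //.
- move=> k; have [->|nk] := eqVneq k k0; first by [].
  by rewrite in_cons (negbTE nk) /=; exact: g2.
- move=> k k'; have [->|nk] := eqVneq k k0; have [->|nk'] := eqVneq k' k0.
  + by move=> _ _; rewrite ?eqxx.
  + move=> _; rewrite in_cons (negbTE nk') /= => kk' _.
    have h : separated D (b k0) (b k').
      by apply: prk; rewrite ?mem_head // 1?eq_sym // in_cons kk' orbT.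
    by apply: (separatedS h s1); case: (g2 _ kk').
  + rewrite in_cons (negbTE nk) /= => kk _ _.
    have h : separated D (b k) (b k0).
      by apply: prk; rewrite ?mem_head // in_cons kk orbT.
    by apply: (separatedS h _ s1); case: (g2 _ kk).
  + by rewrite !in_cons (negbTE nk) (negbTE nk') /=; exact: p2.
- by move=> z /sa2 /sa.
- move=> k; have [->|nk] := eqVneq k k0; first by move=> _; apply: (separatedS pr1).
  by rewrite in_cons (negbTE nk) /=; exact: pa2.
Qed.

Lemma separate_seq (ks : seq K) (b : K -> X * R) :
  (forall k, k \in ks -> good_ball F (b k)) ->
  exists b', (forall k, k \in ks -> good_ball F (b' k) /\ bset (b' k) `<=` bset (b k)) /\
    (forall k k', k \in ks -> k' \in ks -> k != k' -> separated D (b' k) (b' k')).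
Proof.
elim: ks => [|k0 ks IH] gbk; first by exists b; split => k; rewrite in_nil.
have [|b1 [g1 p1]] := IH; first by move=> k kk; apply: gbk; rewrite in_cons kk orbT.
have [|//||b2 [a2 [g2 p2 ga2 sa2 pa2]]] := @separate_from_seq ks b1 (b k0).
- by move=> k kk; case: (g1 _ kk).
- exact: gbk (mem_head _ _).
exists (fun z => if z == k0 then a2 else b2 z); split.
- move=> k; have [->|nk] := eqVneq k k0; first by [].
  rewrite in_cons (negbTE nk) /= => kk.
  have [? s2] := g2 _ kk; have [_ s1] := g1 _ kk.
  by split => // z /s2 /s1.
- move=> k k'; have [->|nk] := eqVneq k k0; have [->|nk'] := eqVneq k' k0.
  + by move=> _ _; rewrite ?eqxx.
  + move=> _; rewrite in_cons (negbTE nk') /= => kk' _.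
    by apply: separated_sym => //; exact: pa2.
  + by rewrite in_cons (negbTE nk) /= => kk _ _; exact: pa2.
  + by rewrite !in_cons (negbTE nk) (negbTE nk') /=; exact: p2.
Qed.

End SeparateFamily.
Fixpoint bit_seqs (k : nat) : seq (seq bool) :=
  if k is k'.+1 then [seq b :: s | b <- [:: true; false], s <- bit_seqs k']
  else [:: [::]].

Lemma bit_seqsP s : s \in bit_seqs (size s).
Proof.
elim: s => [|b s IH] //.
change (b :: s \in [seq b0 :: s0 | b0 <- [:: true; false], s0 <- bit_seqs (size s)]).
by apply: (allpairs_f (fun b s => b :: s)) => //; case: b; rewrite !inE.
Qed.

Lemma size_bit_seqs k s : s \in bit_seqs k -> size s = k.
Proof.
elim: k s => [|k IH] s; first by rewrite inE => /eqP ->.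
by move=> /allpairsPdep [b [s' [_ hs ->]]]; rewrite /= (IH _ hs).
Qed.

(* Nodes of the Cantor scheme at stage n: a node (m, s) records a branch born at
   stage m <= n together with the n - m binary choices made since then. *)
Definition scheme_node (n : nat) (p : nat * seq bool) :=
  (p.1 <= n)%N /\ size p.2 = (n - p.1)%N.

Definition scheme_nodes (n : nat) : seq (nat * seq bool) :=
  [seq (m, s) | m <- iota 0 n.+1, s <- bit_seqs (n - m)].

Lemma scheme_nodesP n p : scheme_node n p <-> p \in scheme_nodes n.
Proof.
split.
  case: p => m s [/= mn sz]; apply/allpairsPdep; exists m, s; split => //.
    by rewrite mem_iota /= add0n ltnS.
  by rewrite -sz bit_seqsP.
move=> /allpairsPdep [m [s [hm hs ->]]]; split => /=.
  by move: hm; rewrite mem_iota add0n ltnS.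
exact: size_bit_seqs.
Qed.

Section CumulativeRelation.
Context {R : realType} {X : metricType R}.
Variable F : set X.
Variable W : nat -> set (X * X).
Hypotheses (oW : forall k, open (W k)) (bW : forall k, box_dense F (W k)).

Fixpoint Wcap n : set (X * X) := match n with
  | 0 => W 0 `&` swap_rel (W 0)
  | n'.+1 => Wcap n' `&` (W n'.+1 `&` swap_rel (W n'.+1)) end.

Lemma open_Wcap n : open (Wcap n).
Proof.
by elim: n => [|n IH] /=; apply: openI => //; try apply: openI => //;
  apply: open_swap_rel.
Qed.

Lemma box_dense_Wcap n : box_dense F (Wcap n).
Proof.
have bsym k : box_dense F (W k `&` swap_rel (W k)).
  by apply: box_denseI => //; exact: box_dense_swap.
elim: n => [|n IH] //=.
by apply: box_denseI => //; exact: open_Wcap.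
Qed.

Lemma Wcap_sym n p : Wcap n p -> Wcap n (p.2, p.1).
Proof.
case: p => a b; elim: n => [|n IH] /=; first by move=> [].
by move=> [/IH ? [? ?]].
Qed.

Lemma Wcap_sub k n : (k <= n)%N -> Wcap n `<=` W k.
Proof.
elim: n => [|n IH]; first by rewrite leqn0 => /eqP -> p [].
rewrite leq_eqVlt => /orP [/eqP -> p [_ []]//|]; rewrite ltnS => kn p [/IH h _].
exact: h.
Qed.

End CumulativeRelation.

Section SchemeStep.
Local Open Scope ring_scope.
Context {R : realType} {X : metricType R}.
Variable F : set X.
Variable W : nat -> set (X * X).
Variable B : nat -> set X.
Hypotheses (F0 : F !=set0) (perfF : perfect_on F)
  (oW : forall k, open (W k)) (bW : forall k, box_dense F (W k))
  (oB : forall n, open (B n)).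

(* The branch born at stage n + 1 must start inside the basic open set B n,
   whenever B n meets F. *)
Definition target n : set X := if pselect (B n `&` F !=set0) then B n else setT.

Lemma target_ball n : exists b, good_ball F b /\ bset b `<=` target n.
Proof.
have [[z [tz Fz]] otg] : target n `&` F !=set0 /\ open (target n).
  rewrite /target; case: pselect => h; first by split; [exact: h|exact: oB].
  by split; [case: F0 => z Fz; exists z | exact: openT].
have /nbhs_ballP [e e0 sub] : nbhs z (target n) by rewrite nbhsE; exists (target n).
by exists (z, e).
Qed.

Definition scheme_ok n (S : nat * seq bool -> X * R) :=
  (forall p, scheme_node n p -> good_ball F (S p)) /\
  (forall p q, scheme_node n p -> scheme_node n q -> p != q ->
     separated (Wcap W n) (S p) (S q)).

Definition scheme_refines n (S S' : nat * seq bool -> X * R) :=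
  (forall m s b, scheme_node n (m, s) ->
     bset (S' (m, b :: s)) `<=` ball (S (m, s)).1 ((S (m, s)).2 / 2)) /\
  bset (S' (n.+1, [::])) `<=` target n.

(* Stage n + 1 of the scheme: halve the balls of stage n for both children,
   add the newborn node, and separate all of them for the next relation. *)
Lemma scheme_step n S : scheme_ok n S ->
  exists S', scheme_ok n.+1 S' /\ scheme_refines n S S'.
Proof.
move=> [gS pS]; have [b0 [gb0 sb0]] := target_ball n.
pose P (p : nat * seq bool) : X * R := if p.1 == n.+1 then b0 else
  ((S (p.1, behead p.2)).1, (S (p.1, behead p.2)).2 / 2).
have gP p : p \in scheme_nodes n.+1 -> good_ball F (P p).
  case: p => m s /scheme_nodesP [/= mn sz]; rewrite /P /=.
  have [//|nm] := eqVneq m n.+1.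
  have mn' : (m <= n)%N by rewrite leq_eqVlt (negbTE nm) /= in mn.
  have vp : scheme_node n (m, behead s) by split; rewrite //= size_behead sz subSn.
  by have [F1 r1] := gS _ vp; split; rewrite //= divr_gt0.
have [S' [g' p']] := separate_seq perfF (open_Wcap oW (n := n.+1))
  (box_dense_Wcap oW bW n.+1) (fun p => @Wcap_sym _ _ W n.+1 p) gP.
exists S'; split; split.
- by move=> p /scheme_nodesP /g' [].
- by move=> p q /scheme_nodesP vp /scheme_nodesP vq; exact: p'.
- move=> m s b [/= mn sz].
  have /scheme_nodesP vc : scheme_node n.+1 (m, b :: s).
    by split => /=; [exact: leqW|rewrite sz subSn].
  have [_] := g' _ vc; rewrite /P /=.
  by have -> : (m == n.+1) = false by apply/negbTE; rewrite neq_ltn ltnS mn.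
- have /scheme_nodesP vr : scheme_node n.+1 (n.+1, [::]) by split; rewrite //= subnn.
  by have [_] := g' _ vr; rewrite /P /= eqxx => sub z /sub /sb0.
Qed.

End SchemeStep.

Lemma cantor_no_injection (g : (nat -> bool) -> nat) : ~ injective g.
Proof.
move=> ig.
pose d (n : nat) : bool := match pselect (exists a, g a = n) with
  | left P => ~~ (sval (cid P)) n | right _ => true end.
have : d (g d) = ~~ d (g d).
  rewrite {1}/d; case: pselect => [P|nP]; last by exfalso; apply: nP; exists d.
  by have := svalP (cid P) => /ig ->.
by case: (d (g d)).
Qed.

(* The first d values of a branch a, most recent first. *)
Fixpoint branch_prefix (a : nat -> bool) (d : nat) : seq bool :=
  if d is d'.+1 then a d' :: branch_prefix a d' else [::].

Lemma size_branch_prefix a d : size (branch_prefix a d) = d.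
Proof. by elim: d => //= d ->. Qed.

Lemma branch_prefix_eq a a' d : branch_prefix a d = branch_prefix a' d ->
  forall i, (i < d)%N -> a i = a' i.
Proof.
elim: d => // d IH /= [ad /IH h] i; rewrite ltnS leq_eqVlt => /orP [/eqP ->//|].
exact: h.
Qed.
Section Mycielski.
Context {R : realType} {X : metricType R}.
Variable F : set X.
Variable W : nat -> set (X * X).
Variable B : nat -> set X.
Hypotheses (cF : compact F) (F0 : F !=set0) (perfF : perfect_on F)
  (oW : forall k, open (W k)) (bW : forall k, box_dense F (W k))
  (oB : forall n, open (B n))
  (baseB : forall x N, nbhs x N -> exists n, B n x /\ B n `<=` N).

Let S0 : nat * seq bool -> X * R := fun _ => (sval (cid F0), 1%R).

Let scheme_ok0 : scheme_ok F W 0 S0.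
Proof.
split; first by move=> p _; split => //; exact: (svalP (cid F0)).
move=> [m s] [m' s'] [/= m0 s0] [/= m'0 s'0].
move: m0 m'0; rewrite !leqn0 => /eqP em /eqP em'; subst m m'.
by move: s0 s'0; rewrite subnn => /size0nil -> /size0nil ->; rewrite eqxx.
Qed.

Let next_stage n (S : {S | scheme_ok F W n S}) :
  {S' | scheme_ok F W n.+1 S' /\ scheme_refines F B n (sval S) S'} :=
  cid (scheme_step F0 perfF oW bW oB (svalP S)).

Fixpoint stage n : {S | scheme_ok F W n S} := match n with
  | 0 => exist _ S0 scheme_ok0
  | n'.+1 => exist _ (sval (next_stage (stage n')))
                     (proj1 (svalP (next_stage (stage n'))))
  end.

Let Sn n := sval (stage n).
Let Sn_ok n : scheme_ok F W n (Sn n). Proof. exact: svalP (stage n). Qed.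
Let Sn_refines n : scheme_refines F B n (Sn n) (Sn n.+1).
Proof. exact: (proj2 (svalP (next_stage (stage n)))). Qed.

Let node m a N := (m, branch_prefix a (N - m)).
Let node_ok m a N : (m <= N)%N -> scheme_node N (node m a N).
Proof. by move=> mN; split; rewrite //= size_branch_prefix. Qed.

Let branch_ball m a N := bset (Sn N (node m a N)).

Let branch_ball_succ m a N : (m <= N)%N ->
  closure (branch_ball m a N.+1) `<=` branch_ball m a N.
Proof.
move=> mN; rewrite /branch_ball /node subSn //=.
have [_ r1] := (Sn_ok N).1 _ (node_ok a mN).
have sub := (Sn_refines N).1 _ _ (a (N - m)%N) (node_ok a mN).
by move=> z /(closureS sub) /(closure_ball_half r1).
Qed.

Let branch_ball_mono m a N k : (m <= N)%N ->
  branch_ball m a (N + k) `<=` branch_ball m a N.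
Proof.
move=> mN; elim: k => [|k IH]; first by rewrite addn0.
rewrite addnS => z /(@subset_closure _ (branch_ball m a (N + k).+1)) h.
by apply: IH; apply: branch_ball_succ h; exact: leq_trans mN (leq_addr _ _).
Qed.

Let branch_point_ex m a : exists x, F x /\ forall N, (m <= N)%N -> branch_ball m a N x.
Proof.
pose c k := (Sn (k + m) (node m a (k + m))).1.
have Fc : (c @ \oo) F.
  by exists 0%N => // k _; have [] := (Sn_ok (k + m)).1 _ (node_ok a (leq_addl k m)).
have [x [Fx clx]] := cF _ Fc.
have clB N : (m <= N)%N -> closure (branch_ball m a N) x.
  move=> mN V nV; apply: clx nV; exists (N - m)%N => // k /= hk.
  have kmN : (N <= k + m)%N by rewrite addnC -leq_subLR.
  have := @branch_ball_mono m a N (k + m - N) mN; rewrite subnKC //; apply.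
  have [_ r] := (Sn_ok (k + m)).1 _ (node_ok a (leq_addl k m)).
  exact: ballxx.
by exists x; split => // N mN; apply: branch_ball_succ => //; apply/clB/leqW.
Qed.

Let point m a := sval (cid (branch_point_ex m a)).
Let point_F m a : F (point m a). Proof. exact: (svalP (cid (branch_point_ex m a))).1. Qed.
Let point_ball m a N : (m <= N)%N -> branch_ball m a N (point m a).
Proof. exact: (svalP (cid (branch_point_ex m a))).2. Qed.

Let point_separated m a m' a' N : (m <= N)%N -> (m' <= N)%N ->
  node m a N != node m' a' N ->
  point m a <> point m' a' /\ Wcap W N (point m a, point m' a').
Proof.
move=> mN m'N hne.
have [d1 d2] := (Sn_ok N).2 _ _ (node_ok a mN) (node_ok a' m'N) hne.
have h1 := point_ball a mN; have h2 := point_ball a' m'N.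
split; last exact: d2.
move=> e; rewrite -e in h2.
have : (bset (Sn N (node m a N)) `&` bset (Sn N (node m' a' N))) (point m a) by [].
by rewrite d1.
Qed.

Let nodes_eventually_differ m a m' a' : m <> m' \/ (exists i, a i <> a' i) ->
  exists N0, forall N, (N0 <= N)%N ->
    [/\ (m <= N)%N, (m' <= N)%N & node m a N != node m' a' N].
Proof.
case=> [mm'|[i ai]].
  exists (m + m')%N => N h; split.
  - exact: leq_trans (leq_addr _ _) h.
  - exact: leq_trans (leq_addl _ _) h.
  - by apply/eqP => -[e _].
exists (m + m' + i.+1)%N => N h; split.
- by apply: leq_trans h; rewrite -addnA leq_addr.
- by apply: leq_trans h; rewrite (addnC m) -addnA leq_addr.
- apply/eqP => -[e]; subst m' => /branch_prefix_eq /(_ i) h'; apply/ai/h'.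
  by rewrite ltn_subRL; apply: leq_trans h; rewrite -addnS -addnA leq_add2l leq_addl.
Qed.

Let branch_points := [set x | exists m a, x = point m a].

(* Two distinct branch points come from distinct branches, hence lie in
   separated balls from some stage on. *)
Let branch_points_W x x' : branch_points x -> branch_points x' -> x <> x' ->
  forall k, W k (x, x').
Proof.
move=> [m [a ->]] [m' [a' ->]] xx' k.
have hd : m <> m' \/ (exists i, a i <> a' i).
  apply: contrapT => /not_orP [/contrapT mm' /forallNP hi]; subst m'.
  by apply: xx'; congr point; apply: funext => i; apply: contrapT; exact: hi.
have [N0 hN] := nodes_eventually_differ hd.
have [h1 h2 h3] := hN (maxn N0 k) (leq_maxl _ _).
exact: (Wcap_sub (leq_maxr N0 k)) (point_separated h1 h2 h3).2.
Qed.

(* The branches born at stage 0 give an injection of the Cantor space. *)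
Let branch_points_uncountable : ~ countable branch_points.
Proof.
move=> /countable_injP [f finj].
apply: (@cantor_no_injection (fun a => f (point 0 a))) => a a' /finj e.
have {}e := e (mem_set (ex_intro _ 0%N (ex_intro _ a erefl) : branch_points (point 0 a)))
              (mem_set (ex_intro _ 0%N (ex_intro _ a' erefl) : branch_points (point 0 a'))).
apply: funext => i; apply: contrapT => ai.
have [N0 hN] := nodes_eventually_differ (m:=0) (m':=0) (or_intror (ex_intro _ i ai)).
have [h1 h2 h3] := hN N0 (leqnn _).
by have [] := point_separated h1 h2 h3.
Qed.

(* The branch born at stage n + 1 lies in B n whenever B n meets F. *)
Let branch_points_dense : F `<=` closure branch_points.
Proof.
move=> z Fz V nV; have [n [Bnz sub]] := baseB nV.
pose a0 := fun _ : nat => true.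
exists (point n.+1 a0); split; first by exists n.+1, a0.
apply: sub; have := point_ball a0 (leqnn n.+1).
rewrite /branch_ball /node subnn /= => /((Sn_refines n).2); rewrite /target.
by case: pselect => // nF; exfalso; apply: nF; exists z.
Qed.

Theorem mycielski : exists S : set X, [/\ S `<=` F, ~ countable S,
  F `<=` closure S & forall x x', S x -> S x' -> x <> x' -> forall k, W k (x, x')].
Proof.
exists branch_points; split.
- by move=> _ [m [a ->]]; exact: point_F.
- exact: branch_points_uncountable.
- exact: branch_points_dense.
- exact: branch_points_W.
Qed.

End Mycielski.
(** * Flows *)

Section ActionFacts.
Context {T : topologicalType} (mul : T -> T -> T) (inv : T -> T) (e : T).
Hypothesis HG : topological_group mul inv e.
Context {X : topologicalType} (act : T -> X -> X).
Hypothesis ha : is_action mul e act.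

Lemma act_cont t : continuous (act t).
Proof.
case: ha => _ _ hc x.
have h1 : (fun y => (t, y)) @ x --> (t, x).
  by apply: cvg_pair; [exact: cvg_cst|exact: cvg_id].
exact: (continuous_comp h1 (hc (t, x))).
Qed.

Lemma act_invK t x : act (inv t) (act t x) = x.
Proof. by case: ha HG => h1 h2 _ [_ _ hi _ _]; rewrite -h2 (hi t).1 h1. Qed.

Lemma act_Kinv t x : act t (act (inv t) x) = x.
Proof. by case: ha HG => h1 h2 _ [_ _ hi _ _]; rewrite -h2 (hi t).2 h1. Qed.

Lemma act2_cont t : continuous (act2 act t).
Proof.
by move=> p; apply: cvg_pair; [apply: continuous_fst_comp | apply: continuous_snd_comp];
  exact: act_cont.
Qed.

Lemma act2_joint_cont : continuous (fun q : T * (X * X) => act2 act q.1 q.2).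
Proof.
case: ha => _ _ hc q; apply: cvg_pair.
  have h1 : (fun r : T * (X * X) => (r.1, r.2.1)) @ q --> (q.1, q.2.1).
    apply: cvg_pair; first exact: cvg_fst.
    by apply: (@continuous_comp _ _ _ snd fst q); [exact: cvg_snd|exact: cvg_fst].
  exact: (continuous_comp h1 (hc (q.1, q.2.1))).
have h1 : (fun r : T * (X * X) => (r.1, r.2.2)) @ q --> (q.1, q.2.2).
  apply: cvg_pair; first exact: cvg_fst.
  by apply: (@continuous_comp _ _ _ snd snd q); exact: cvg_snd.
exact: (continuous_comp h1 (hc (q.1, q.2.2))).
Qed.

Lemma act2_mul s t p : act2 act (mul s t) p = act2 act s (act2 act t p).
Proof. by case: ha => _ h2 _; rewrite /act2 !h2. Qed.

Lemma act2_invK t p : act2 act (inv t) (act2 act t p) = p.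
Proof. by rewrite /act2 /= !act_invK; case: p. Qed.

End ActionFacts.

Lemma maximal_open_complement {E Y : topologicalType} (f : E -> Y) (Z : set E) :
  compact Z -> (forall y, closed (f @^-1` [set y])) -> f @` Z = setT ->
  exists A, [/\ open A, f @` (Z `\` A) = setT &
    forall U, open U -> A `<` U -> f @` (Z `\` U) <> setT].
Proof.
move=> cZ clf fZ.
pose PP := [set U : set E | open U /\ f @` (Z `\` U) = setT].
suff [A [[oA sA] maxA]] : exists A, PP A /\ forall B, A `<` B -> ~ PP B.
  by exists A; split => // U oU AU fU; apply: (maxA U AU).
apply: Zorn_bigcup => Fm FP tot; split; first by apply: bigcup_open => U /FP [].
apply/seteqP; split => // y _.
have [[U0 FU0]|nF] := pselect (Fm !=set0); last first.
  suff -> : \bigcup_(X0 in Fm) X0 = set0 by rewrite setD0 fZ.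
  by apply/seteqP; split => // q [U FU _]; apply: nF; exists U.
(* the traces of the fiber of y on the complements Z \ U, U in the chain,
   generate a proper filter; a cluster point avoids the union of the chain. *)
pose g U := Z `&` ~` U `&` f @^-1` [set y].
have gF : Filter (filter_from Fm g).
  apply: filter_from_filter; first by exists U0.
  move=> U1 U2 FU1 FU2; have [h|h] := tot _ _ FU1 FU2.
    by exists U2 => // q [[Zq nq] rq]; do 2 split => //; split => // /h.
  by exists U1 => // q [[Zq nq] rq]; do 2 split => //; split => // /h.
have pF : ProperFilter (filter_from Fm g).
  apply: filter_from_proper => U /FP [_ rU].
  have : (f @` (Z `\` U)) y by rewrite rU.
  by move=> [z [Zz nz] rz]; exists z.
have gZ : filter_from Fm g Z by exists U0 => // q [[]].
have [x [Zx clx]] := cZ _ pF gZ.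
have hx U : Fm U -> ~ U x /\ f x = y.
  move=> FU; have [oU _] := FP _ FU.
  have clS : closed (~` U `&` f @^-1` [set y]).
    by apply: closedI; [exact: open_closedC|exact: clf].
  have : closure (~` U `&` f @^-1` [set y]) x.
    apply: (@closureS _ (g U)); first by move=> q [[_ nq] rq].
    by move=> V nV; apply: clx nV; exists U.
  by rewrite -(closure_id _).1 // => -[].
exists x; last by have [] := hx _ FU0.
by split => // -[U FU Ux]; have [] := hx _ FU.
Qed.

Section Projection.
Context {R : realType} {T : topologicalType} {X Y : metricType R}.
Variables (mul : T -> T -> T) (inv : T -> T) (e : T)
  (actX : T -> X -> X) (actY : T -> Y -> Y) (pi : X -> Y).
Hypotheses (HG : topological_group mul inv e) (cX : compact [set: X])
  (aX : is_action mul e actX) (aY : is_action mul e actY)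
  (cpi : continuous pi) (eqv : forall t x, pi (actX t x) = actY t (pi x)).

Definition rho (p : X * X) : Y := pi p.1.

Lemma rho_cont : continuous rho.
Proof. exact: continuous_fst_comp. Qed.

Lemma closed_rho_fiber y : closed (rho @^-1` [set y]).
Proof. exact/closed_fiber/metric_hausdorff/rho_cont. Qed.

Lemma rho_act2 t p : rho (act2 actX t p) = actY t (rho p).
Proof. by rewrite /rho /act2 /= eqv. Qed.

Lemma compact_XX : compact [set: X * X].
Proof. by rewrite -setXTT; exact: compact_setX. Qed.

Lemma closed_rho_image (A : set (X * X)) : closed A -> closed (rho @` A).
Proof.
move=> cA; apply: (compact_closed (@metric_hausdorff _ Y)).
apply: continuous_compact; first exact/continuous_subspaceT/rho_cont.
exact: subclosed_compact cA compact_XX _.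
Qed.

Lemma closed_Rpi : closed (Rpi pi).
Proof.
have -> : Rpi pi = ~` ((fun p : X * X => (pi p.1, pi p.2)) @^-1`
                     [set q : Y * Y | q.1 <> q.2]).
  by apply/seteqP; split => p /=; [move=> -> |move=> /contrapT].
apply/open_closedC/open_comp; last exact: open_offdiag.
by move=> p _; apply: cvg_pair; [apply: continuous_fst_comp | apply: continuous_snd_comp].
Qed.

Lemma Rpi_invariant t p : Rpi pi p -> Rpi pi (act2 actX t p).
Proof. by rewrite /Rpi /act2 /= !eqv => ->. Qed.

Hypothesis minY : minimal_flow actY.

Section OrbitClosure.
Variable p : X * X.
Let Z := orbit_closure2 actX p.

Lemma orbit_closure_Rpi : Rpi pi p -> Z `<=` Rpi pi.
Proof.
move=> Rp.
rewrite (closure_id (Rpi pi)).1; last exact: closed_Rpi.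
by apply: closureS => _ [t _ <-]; exact: Rpi_invariant.
Qed.

Lemma rho_orbit_closure : rho @` Z = setT.
Proof.
have pZ : Z p.
  apply: subset_closure; exists e => //.
  by case: aX => h1 _ _; rewrite /act2 !h1 -surjective_pairing.
apply: minY; first by exists (rho p), p.
  exact/closed_rho_image/closed_closure.
move=> t _ [z Zz <-]; exists (act2 actX t z); last by rewrite rho_act2.
move: (image_closure (act2_cont aX (t := t)) (ex_intro2 _ _ z Zz erefl)).
by apply: closureS => _ [_ [s _ <-] <-]; exists (mul t s); rewrite // (act2_mul aX).
Qed.

Lemma ap_orbit_closure_translates W : ap_point mul actX (Rpi pi) p -> nbhs p W ->
  exists2 K, compact K & forall z, Z z ->
    exists k c, [/\ K k, closure W c, Rpi pi c & z = act2 actX k c].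
Proof.
move=> [_ syn] nW; have [K [cK hK]] := syn W nW.
pose C := closure W `&` Rpi pi.
have cC : compact C.
  by apply: subclosed_compact compact_XX _ => //; apply: closedI;
    [exact: closed_closure|exact: closed_Rpi].
pose I := (fun q : T * (X * X) => act2 actX q.1 q.2) @` (K `*` C).
have cI : compact I.
  apply: continuous_compact; last exact: compact_setX.
  exact/continuous_subspaceT/(act2_joint_cont aX).
have ZI : Z `<=` I.
  rewrite (closure_id I).1; last exact: compact_closed (hausdorff_prod
    (@metric_hausdorff _ X) (@metric_hausdorff _ X)) cI.
  apply: closureS => _ [t _ <-]; have [k [a [Kk [[Wa Ra] ->]]]] := hK t.
  exists (k, act2 actX a p); last by rewrite /= (act2_mul aX).
  by split => //; split => //; exact: subset_closure.
exists K => // z /ZI [[k c] [Kk [Wc Rc]] <-].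
by exists k, c.
Qed.

End OrbitClosure.

Hypothesis dap : dense_ap mul actX (Rpi pi).

(* Take an a.p. point p in P, its orbit
   closure Z ⊆ K (closure W ∩ R_pi) and a maximal open A with rho (Z \ A) = Y;
   a point m = k c of Z \ A has k^-1 m ∈ P.  The points of Y whose whole
   rho-fiber in Z \ A lies in k P form an open set, nonempty by maximality
   of A, and its k^-1-translate lies in rho (P ∩ R_pi). *)
Lemma semi_open P : open P -> P `&` Rpi pi !=set0 ->
  exists V, [/\ open V, V !=set0 & V `<=` rho @` (P `&` Rpi pi)].
Proof.
move=> oP PR; have [p [Pp apP]] := dap oP PR.
have [Rp _] := apP; pose Z := orbit_closure2 actX p.
have [W nW clWP] := nbhs_closure_sub (open_nbhs_nbhs (conj oP Pp)).
have [K cK ZK] := ap_orbit_closure_translates apP nW.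
have cZ : compact Z by apply: subclosed_compact compact_XX _ => //; exact: closed_closure.
have [A [oA ZA maxA]] :=
  maximal_open_complement cZ closed_rho_fiber (rho_orbit_closure p).
have [m [Zm nAm] _] : (rho @` (Z `\` A)) (rho p) by rewrite ZA.
have [k [c [Kk Wc Rc mkc]]] := ZK m Zm.
pose Q := act2 actX (inv k) @^-1` P.
have oQ : open Q by apply: open_comp => // q _; exact: (act2_cont aX).
have Qm : Q m by rewrite /Q /= mkc (act2_invK HG aX); exact: clWP.
have AQ : rho @` (Z `\` (A `|` Q)) <> setT.
  apply: maxA; first exact: openU.
  by split=> [z Az|sub]; [left | apply/nAm/sub; right].
pose V := ~` (rho @` (Z `\` (A `|` Q))).
have oV : open V.
  apply/closed_openC/closed_rho_image; rewrite setDE.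
  by apply: closedI; [exact: closed_closure | exact/open_closedC/openU].
have [y0 Vy0] : V !=set0.
  apply: contrapT => /set0P/negP; rewrite negbK => /eqP V0; apply: AQ.
  by rewrite -[LHS]setCK -/V V0 setC0.
exists (actY k @^-1` V); split.
- by apply: open_comp => // y _; exact: (act_cont aY).
- by exists (actY (inv k) y0) => /=; rewrite (act_Kinv HG aY).
- move=> y Vy; have [z [Zz nAz] rz] : (rho @` (Z `\` A)) (actY k y) by rewrite ZA.
  have Qz : Q z by apply: contrapT => nQz; apply: Vy; exists z => //; split => // -[].
  exists (act2 actX (inv k) z); first by split => //; exact/Rpi_invariant/(orbit_closure_Rpi Rp).
  by rewrite rho_act2 rz (act_invK HG aY).
Qed.

Lemma semi_open_near P y N : open P -> (rho @` (P `&` Rpi pi)) y -> nbhs y N ->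
  exists V, [/\ open V, V !=set0 & V `<=` N `&` rho @` (P `&` Rpi pi)].
Proof.
move=> oP [q [Pq Rq] <-]; rewrite nbhsE => -[N0 [oN0 N0q] sN0].
have oP' : open (P `&` rho @^-1` N0).
  by apply: openI => //; apply: open_comp => // z _; exact: rho_cont.
have [|V [oV V0 sV]] := semi_open oP'; first by exists q.
exists V; split => // v /sV [z [[Pz N0z] Rz] <-]; split; first exact: sN0.
by exists z.
Qed.

Definition generic_set (O P : set (X * X)) : set Y :=
  ~` closure (rho @` (O `&` Rpi pi)) `|` interior (rho @` (P `&` Rpi pi)).

Lemma open_generic_set O P : open (generic_set O P).
Proof. by apply: openU; [exact/closed_openC/closed_closure | exact: open_interior]. Qed.

Lemma dense_generic_set O P : open P ->
  O `&` Rpi pi `<=` closure (P `&` Rpi pi) -> dense (generic_set O P).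
Proof.
move=> oP sub N [y Ny] oN.
have [[y1 [Ny1 ny1]]|h] := pselect (exists y1, N y1 /\ ~ closure (rho @` (O `&` Rpi pi)) y1).
  by exists y1; split => //; left.
have cly : closure (rho @` (O `&` Rpi pi)) y by apply: contrapT => ncl; apply: h; exists y.
have [_ [[q Oq <-] Nq]] := cly N (open_nbhs_nbhs (conj oN Ny)).
have nq : nbhs q (rho @^-1` N).
  by apply: open_nbhs_nbhs; split => //; apply: open_comp => // z _; exact: rho_cont.
have [q' [[Pq' Rq'] Nq']] := sub _ Oq _ nq.
have [V [oV [v Vv] sV]] := semi_open_near oP (ex_intro2 _ _ q' (conj Pq' Rq') erefl)
  (open_nbhs_nbhs (conj oN Nq')).
exists v; split; first by have [] := sV _ Vv.
right; rewrite /interior; apply: (@filterS _ _ _ V); first by move=> w /sV [].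
exact: open_nbhs_nbhs.
Qed.

Lemma generic_setP O P y : generic_set O P y ->
  (rho @` (O `&` Rpi pi)) y -> (rho @` (P `&` Rpi pi)) y.
Proof.
case=> [ncl h|]; first by exfalso; apply: ncl; exact: subset_closure.
by move=> /interior_subset.
Qed.

End Projection.

(** * Generic fibers of a weakly mixing extension *)

Lemma Rpi_offdiag (X Y : Type) (pi : X -> Y) : Rpi pi <> @diagX X ->
  exists q, Rpi pi q /\ q.1 <> q.2.
Proof.
move=> ntriv; apply: contrapT => /forallNP h; apply: ntriv; apply/seteqP; split.
  by move=> q Rq; apply: contrapT => nq; apply: (h q).
by move=> [a b]; rewrite /diagX /Rpi /= => ->.
Qed.

Lemma perfect_not_isolated (U : topologicalType) (F : set U) :
  perfect_on F -> forall x, ~ isolated F x.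
Proof.
move=> perf x [/set_mem Fx [V nV VF]].
have [x' Fx' [Vx' nx']] := perf x Fx V nV.
by have : (V `&` F) x' by []; rewrite VF.
Qed.

Section GenericFibers.
Context {R : realType} {T : topologicalType} {X Y : metricType R}.
Variables (mul : T -> T -> T) (inv : T -> T) (e : T)
  (actX : T -> X -> X) (actY : T -> Y -> Y) (pi : X -> Y).
Hypotheses (HG : topological_group mul inv e) (cX : compact [set: X])
  (aX : is_action mul e actX) (aY : is_action mul e actY)
  (cpi : continuous pi) (eqv : forall t x, pi (actX t x) = actY t (pi x))
  (ntriv : Rpi pi <> @diagX X) (minY : minimal_flow actY)
  (dap : dense_ap mul actX (Rpi pi)) (wm : weakly_mixing actX pi).
Variable B : nat -> set X.
Hypotheses (oB : forall n, open (B n))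
  (baseB : forall x N, nbhs x N -> exists n, B n x /\ B n `<=` N).

Definition visits (Q : set (X * X)) : set (X * X) :=
  [set p | Q `&` Rpi pi !=set0 -> exists t, Q (act2 actX t p)].

Lemma open_visits Q : open Q -> open (visits Q).
Proof.
move=> oQ; have [h|h] := pselect (Q `&` Rpi pi !=set0); last first.
  suff -> : visits Q = setT by exact: openT.
  by apply/seteqP; split => // p _ /h.
have -> : visits Q = \bigcup_t (act2 actX t @^-1` Q).
  apply/seteqP; split => p /=; first by move=> /(_ h) [t Qt]; exists t.
  by move=> [t _ Qt] _; exists t.
by apply: bigcup_open => t _; apply: open_comp => // p _; exact: (act2_cont aX).
Qed.

Lemma visits_dense Q O : open Q -> open O ->
  O `&` Rpi pi `<=` closure (O `&` visits Q `&` Rpi pi).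
Proof.
move=> oQ oO q [Oq Rq] N; rewrite nbhsE => -[N0 [oN0 N0q] sN0].
have [h|h] := pselect (Q `&` Rpi pi !=set0); last first.
  by exists q; split; [split; [split => // /h|] | exact: sN0].
have n1 : (N0 `&` O) `&` Rpi pi !=set0 by exists q.
have [t [z [[Qz Rz] [q' [[N0q' Oq'] Rq'] zq']]]] := wm (openI oN0 oO) oQ n1 h.
exists q'; split; last exact: sN0.
by split => //; split => // _; exists t; rewrite zq'.
Qed.

Lemma offdiag_dense O : open O ->
  O `&` Rpi pi `<=` closure (O `&` [set p | p.1 <> p.2] `&` Rpi pi).
Proof.
move=> oO q [Oq Rq] N; rewrite nbhsE => -[N0 [oN0 N0q] sN0].
have [q0 [Rq0 nq0]] := Rpi_offdiag ntriv.
have n1 : (N0 `&` O) `&` Rpi pi !=set0 by exists q.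
have [t [z [[ndz Rz] [q' [[N0q' Oq'] Rq'] zq']]]] :=
  wm (openI oN0 oO) (@open_offdiag _ X) n1 (ex_intro _ q0 (conj nq0 Rq0)).
exists q'; split; last exact: sN0.
by split => //; split => // e12; apply: ndz; rewrite -zq' /act2 /= e12.
Qed.

Definition visits_base (k : nat) : set (X * X) :=
  if unpickle k is Some (i, j) then visits (B i `*` B j) else setT.

Lemma open_visits_base k : open (visits_base k).
Proof.
rewrite /visits_base; case: unpickle => [[i j]|]; last exact: openT.
exact/open_visits/open_setX.
Qed.

Definition generic_family (n : nat) : set Y :=
  match unpickle n : option ((nat * nat * nat) + nat) with
  | Some (inl (i, j, k)) =>
      generic_set pi (B i `*` B j) (B i `*` B j `&` visits_base k)
  | Some (inr i) => generic_set pi (B i `*` B i) (B i `*` B i `&` [set p | p.1 <> p.2])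
  | None => setT end.

Definition generic_points : set Y := \bigcap_n generic_family n.

Lemma generic_pointsP y n : generic_points y -> generic_family n y.
Proof. by move=> Yy; exact: Yy. Qed.

Lemma residual_generic_points : residual generic_points.
Proof.
exists generic_family; split => // n; rewrite /generic_family.
have dense_gen := dense_generic_set HG cX aX aY cpi eqv minY dap.
case: unpickle => [[[[i j] k]|i]|]; split.
- exact: open_generic_set.
- apply: dense_gen.
    by apply: openI; [exact: open_setX | exact: open_visits_base].
  rewrite /visits_base; case: unpickle => [[i' j']|].
    by apply: visits_dense; exact: open_setX.
  by rewrite setIT; exact: subset_closure.
- exact: open_generic_set.
- apply: dense_gen; first by apply: openI; [exact: open_setX|exact: open_offdiag].
  exact/offdiag_dense/open_setX.
- exact: openT.
- by move=> U0 [z Uz] _; exists z.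
Qed.

Section AtGenericPoint.
Variable y : Y.
Hypothesis Yy : generic_points y.
Let fiber := [set x | pi x = y].

(* A generic fiber is perfect: every basic box B i × B i around (x, x) meets
   the fiber at an off-diagonal pair. *)
Lemma generic_fiber_perfect : perfect_on fiber.
Proof.
move=> x Fx N /baseB [i [Bix sub]].
have := generic_pointsP (pickle (inr i : (nat * nat * nat) + nat)) Yy.
rewrite /generic_family pickleK.
move=> /generic_setP /(_ (ex_intro2 _ _ (x, x) (conj (conj Bix Bix) erefl) Fx)).
move=> [[a b] [[[Ba Bb] nab] Rab] rab]; rewrite /rho /= in rab.
have [ax|ax] := pselect (a = x); last by exists a => //; split => //; exact: sub.
exists b; first by rewrite /fiber /= -Rab.
by split; [exact: sub|move=> bx; apply: nab; rewrite ax bx].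
Qed.

Lemma generic_fiber_box_dense k : box_dense fiber (visits_base k).
Proof.
move=> U V oU oV [u [Uu Fu]] [v [Vv Fv]].
have [i [Biu subi]] := baseB (open_nbhs_nbhs (conj oU Uu)).
have [j [Bjv subj]] := baseB (open_nbhs_nbhs (conj oV Vv)).
have := generic_pointsP (pickle (inl (i, j, k) : (nat * nat * nat) + nat)) Yy.
rewrite /generic_family pickleK => /generic_setP.
have Ruv : Rpi pi (u, v) by rewrite /Rpi /= Fu Fv.
move=> /(_ (ex_intro2 _ _ (u, v) (conj (conj Biu Bjv) Ruv) Fu)).
move=> [[a b] [[[Ba Bb] Wab] Rab] rab]; rewrite /rho /= in rab.
exists a, b; split => //; [exact: subi | exact: subj |].
by rewrite /fiber /= -Rab.
Qed.

End AtGenericPoint.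

(* A set of fiber points whose distinct pairs visit every basic box meeting
   R_pi has every such pair Li-Yorke relative to R_pi: the orbit of the pair
   enters every neighborhood of every point of R_pi. *)
Lemma scrambled_of_visits y (S : set X) : S `<=` [set x | pi x = y] ->
  (forall x x', S x -> S x' -> x <> x' -> forall k, visits_base k (x, x')) ->
  LY_scrambled actX pi (Rpi pi) S.
Proof.
move=> Sy hS x x' Sx Sx' nxx'; split; first by rewrite /Rpi /= (Sy _ Sx) (Sy _ Sx').
move=> r Rr N /nbhs_box [A1 [A2 [/baseB [i [Bir subi]] /baseB [j [Bjr subj]] sA]]].
have := hS _ _ Sx Sx' nxx' (pickle (i, j)); rewrite /visits_base pickleK.
case=> [|t [b1 b2]]; first by exists r.
exists (act2 actX t (x, x')); split; first by exists t.
by apply: sA; split; [exact: subi|exact: subj].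
Qed.

End GenericFibers.

Theorem theorem5p5 (R : realType) (T : topologicalType)
    (mul : T -> T -> T) (inv : T -> T) (e : T)
    (X Y : metricType R) (actX : T -> X -> X) (actY : T -> Y -> Y)
    (pi : X -> Y) :
  topological_group mul inv e ->
  compact [set: X] -> compact [set: Y] ->
  is_action mul e actX -> is_action mul e actY ->
  continuous pi -> (forall y, exists x, pi x = y) ->
  (forall t x, pi (actX t x) = actY t (pi x)) ->
  Rpi pi <> @diagX X ->
  minimal_flow actY ->
  dense_ap mul actX (Rpi pi) ->
  weakly_mixing actX pi ->
  exists YLY : set Y, residual YLY /\
    forall y, YLY y ->
      (forall x, ~ isolated [set x | pi x = y] x) /\
      exists B : set X,
        [/\ B `<=` [set x | pi x = y],
            ~ countable B,
            [set x | pi x = y] `<=` closure B &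
            LY_scrambled actX pi (Rpi pi) B].
Proof.
move=> HG cX _ aX aY cpi surj eqv ntriv minY dap wm.
have [B [oB baseB]] := compact_countable_base cX.
exists (generic_points actX pi B).
split; first exact: (residual_generic_points HG cX aX aY cpi eqv ntriv minY dap wm oB).
move=> y Yy; pose F := [set x | pi x = y].
have perfF : perfect_on F := generic_fiber_perfect baseB Yy.
split; first exact: perfect_not_isolated.
have cF : compact F :=
  subclosed_compact (closed_fiber (y := y) cpi (@metric_hausdorff _ Y)) cX (@subsetT _ _).
have F0 : F !=set0 by have [x px] := surj y; exists x.
have [S [SF nS clS visS]] := mycielski cF F0 perfF (fun k => open_visits_base aX oB (k := k))
  (generic_fiber_box_dense baseB Yy) oB baseB.
by exists S; split => //; exact: (scrambled_of_visits (y := y) baseB SF visS).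
Qed.
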